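(* Let $G$ be a connected (claw, bull)-free graph and let $C$ be an induced cycle of $G$ of length $k\ge 6$. Then $G$ is an expansion of $C$.
   Context: A claw is a graph isomorphic to $K_{1,3}$; a bull is the graph obtained from a triangle by adding two pendant edges at two different vertices. A graph is (claw, bull)-free if it has no induced claw and no induced bull. An expansion of a graph $F$ with vertex set $\{v_1,\dots,v_n\}$ is any graph obtained from $F$ by replacing each vertex $v_i$ by a nonempty clique $K^{[i]}$, the cliques being pairwise vertex-disjoint, and adding all edges between $V(K^{[i]})$ and $V(K^{[j]})$ whenever $v_iv_j\in E(F)$ (and no other edges between different cliques). *)

(* Simple graphs: T : finType with symmetric irreflexive e : rel T. *)
From mathcomp Require Import all_boot.
Set Implicit Arguments. Unset Strict Implicit. Unset Printing Implicit Defensive.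

Definition connected (T : finType) (e : rel T) : Prop :=
  forall x y : T, connect e x y.

Definition has_induced (T : finType) (e : rel T) (n : nat) (H : rel 'I_n) : Prop :=
  exists h : 'I_n -> T, injective h /\
    forall i j : 'I_n, i != j -> e (h i) (h j) = H i j.

Definition cyc_adj (k : nat) : rel 'I_k :=
  fun i j => (val j == (val i).+1 %% k) || (val i == (val j).+1 %% k).

Arguments cyc_adj k : clear implicits.

(* The claw K_{1,3}: centre 0, leaves 1,2,3. *)
Definition claw_adj : rel 'I_4 :=
  fun i j => (val i == 0) != (val j == 0).

(* The bull: triangle 0,1,2 with pendant 3 at 0 and pendant 4 at 1. *)
Definition bull_edges : seq (nat * nat) :=
  [:: (0, 1); (1, 2); (0, 2); (0, 3); (1, 4)].
Definition bull_adj : rel 'I_5 :=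
  fun i j => ((val i, val j) \in bull_edges) || ((val j, val i) \in bull_edges).

(* G is an expansion of the graph F on 'I_n: V(G) is partitioned into the
   nonempty cliques K_i = f^-1(i), with x in K_i, y in K_j (i != j) adjacent
   exactly when F i j. *)
Definition is_expansion (T : finType) (e : rel T) (n : nat) (F : rel 'I_n) : Prop :=
  exists f : T -> 'I_n,
    (forall i : 'I_n, exists x : T, f x = i) /\
    (forall x y : T, x != y -> e x y = (f x == f y) || F (f x) (f y)).

From mathcomp Require Import all_boot zify.

(* A vertex [v] off the cycle with a neighbour on it sees exactly three
   consecutive cycle vertices [h (m-1)], [h m], [h (m+1)]: a shorter run of
   neighbours ends in a claw or a bull, four consecutive neighbours together
   with the next cycle vertex give a claw or a bull at [v], and any further
   neighbour forms a claw with [v], [h (m-1)] and [h (m+1)].  So [v] can replace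
   [h m] in the cycle.  Doing this replacement for a vertex at position [i]
   shows that its neighbours have positions too, and that two vertices with
   positions are adjacent exactly when their positions are equal or adjacent.
   By connectivity every vertex has a position, and the position map exhibits
   the graph as an expansion of [C_k]. *)

Set Implicit Arguments.
Unset Strict Implicit.
Unset Printing Implicit Defensive.

Definition cyc_nbhd k (m j : 'I_k) : bool := (m == j) || cyc_adj k m j.

Lemma cyc_nbhd_sym k : symmetric (@cyc_nbhd k).
Proof. by move=> m j; rewrite /cyc_nbhd /cyc_adj eq_sym [X in _ || X]orbC. Qed.

Lemma cyc_adjE k (i j : 'I_k) :
  cyc_adj k i j = [|| (j : nat) == i.+1, (i : nat) == j.+1,
                      ((i : nat) == 0) && ((j : nat) == k.-1)
                    | ((j : nat) == 0) && ((i : nat) == k.-1)].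
Proof.
have hi := ltn_ord i; have hj := ltn_ord j; rewrite /cyc_adj /=.
have succ_mod (a : 'I_k) : a.+1 %% k = if a.+1 < k then a.+1 else 0.
  case: ltnP => [lt_ak | ge_ak]; first by rewrite modn_small.
  have -> : a.+1 = k by have := ltn_ord a; lia.
  by rewrite modnn.
by rewrite !succ_mod; case: (ltnP i.+1 k); case: (ltnP j.+1 k); lia.
Qed.

Lemma ord_eqE k (a b : 'I_k) : (a == b) = ((a : nat) == b).
Proof. by []. Qed.

Lemma cyc_adj_ordS k (a b : 'I_k) : cyc_adj k a b = (b == ordS a) || (a == ordS b).
Proof. by []. Qed.

Lemma cyc_nbhdE k (a j : 'I_k) : cyc_nbhd a j = [|| j == a, j == ordS a | j == ord_pred a].
Proof.
by rewrite /cyc_nbhd cyc_adj_ordS [a == j]eq_sym [a == _]eq_sym (can2_eq (@ordSK k) (@ord_predK k)).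
Qed.

Lemma cyc_nbhd_neq k (a j : 'I_k) : ~~ cyc_nbhd a j -> a != j.
Proof. by apply: contraNneq => ->; rewrite /cyc_nbhd eqxx. Qed.

Lemma ordS_cases k (a : 'I_k) :
  (ordS a = a.+1 :> nat /\ a.+1 < k) \/ (ordS a = 0 :> nat /\ a.+1 = k).
Proof.
have [lt_ak | eq_ak] : a.+1 < k \/ a.+1 = k by have := ltn_ord a; lia.
  by left; rewrite /= modn_small.
by right; rewrite /= eq_ak modnn.
Qed.

Lemma ord_pred_cases k (a : 'I_k) :
  (ord_pred a = a.-1 :> nat /\ 0 < a) \/ (ord_pred a = k.-1 :> nat /\ a = 0 :> nat).
Proof.
have := ordS_cases (ord_pred a); rewrite ord_predK.
by have := ltn_ord (ord_pred a); have := ltn_ord a; lia.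
Qed.

(* Reduces a goal about positions on [C_k] built from [==], [cyc_adj],
   [cyc_nbhd], [ordS] and [ord_pred] to linear arithmetic on their values.
   All hypotheses except [6 <= k] are discarded, so the relevant ones must be
   moved to the goal first. *)
Ltac cyc_arith :=
  rewrite /cyc_nbhd ?cyc_adjE ?ord_eqE;
  repeat match goal with
  | |- context [@nat_of_ord ?k (@ordS _ ?x)] =>
      move: (ordS_cases x); generalize (@nat_of_ord k (ordS x))
  | |- context [@nat_of_ord ?k (@ord_pred _ ?x)] =>
      move: (ord_pred_cases x); generalize (@nat_of_ord k (ord_pred x))
  end;
  repeat match goal with
  | |- context [@nat_of_ord ?k ?x] => move: (ltn_ord x); generalize (@nat_of_ord k x)
  end;
  match goal with k_ge6 : is_true (6 <= _) |- _ => clear -k_ge6 end;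
  intros; lia.

Lemma cyc_nbhd_inj_off k (i m j : 'I_k) : 6 <= k ->
  (forall l, l != i -> cyc_nbhd m l = cyc_nbhd j l) -> m = j.
Proof.
move=> k_ge6 eq_off; apply/eqP/negP => /negP mj.
have [l1 [l2 [l12 diff1 diff2]]] : exists l1 l2,
    [/\ l1 != l2, cyc_nbhd m l1 != cyc_nbhd j l1 & cyc_nbhd m l2 != cyc_nbhd j l2].
  have [mj_adj | mj_nadj] := boolP (cyc_adj k m j); last first.
    by exists m, j; split; move: mj mj_nadj; cyc_arith.
  move: mj_adj; rewrite cyc_adj_ordS => /orP [/eqP-> | /eqP->].
    by exists (ord_pred m), (ordS (ordS m)); split; cyc_arith.
  by exists (ordS (ordS j)), (ord_pred j); split; cyc_arith.
have [l1i | l1i] := eqVneq l1 i.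
  by move: diff2; rewrite eq_off ?eqxx // -l1i eq_sym.
by move: diff1; rewrite eq_off ?eqxx.
Qed.

Lemma induced_claw (T : finType) (e : rel T) (x0 x1 x2 x3 : T) :
  symmetric e ->
  x0 != x1 -> x0 != x2 -> x0 != x3 -> x1 != x2 -> x1 != x3 -> x2 != x3 ->
  e x0 x1 -> e x0 x2 -> e x0 x3 -> ~~ e x1 x2 -> ~~ e x1 x3 -> ~~ e x2 x3 ->
  has_induced e claw_adj.
Proof.
move=> e_sym d01 d02 d03 d12 d13 d23 a01 a02 a03 n12 n13 n23.
exists (fun i : 'I_4 => nth x0 [:: x0; x1; x2; x3] i); split.
  move=> [[|[|[|[|i]]]] Hi] [[|[|[|[|j]]]] Hj] //= E;
  first [ by apply: val_inj | by rewrite E eqxx in d01 d02 d03 d12 d13 d23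
        | by rewrite -E eqxx in d01 d02 d03 d12 d13 d23 ].
move=> [[|[|[|[|i]]]] Hi] [[|[|[|[|j]]]] Hj] //= _; rewrite /claw_adj /=;
first [ by [] | by rewrite e_sym | by apply/negbTE | by apply/negbTE; rewrite e_sym ].
Qed.

Lemma induced_bull (T : finType) (e : rel T) (x0 x1 x2 x3 x4 : T) :
  symmetric e ->
  x0 != x1 -> x0 != x2 -> x0 != x3 -> x0 != x4 -> x1 != x2 -> x1 != x3 -> x1 != x4 ->
  x2 != x3 -> x2 != x4 -> x3 != x4 ->
  e x0 x1 -> e x1 x2 -> e x0 x2 -> e x0 x3 -> e x1 x4 ->
  ~~ e x0 x4 -> ~~ e x1 x3 -> ~~ e x2 x3 -> ~~ e x2 x4 -> ~~ e x3 x4 ->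
  has_induced e bull_adj.
Proof.
move=> e_sym d01 d02 d03 d04 d12 d13 d14 d23 d24 d34 a01 a12 a02 a03 a14 n04 n13 n23 n24 n34.
exists (fun i : 'I_5 => nth x0 [:: x0; x1; x2; x3; x4] i); split.
  move=> [[|[|[|[|[|i]]]]] Hi] [[|[|[|[|[|j]]]]] Hj] //= E;
  first [ by apply: val_inj | by rewrite E eqxx in d01 d02 d03 d04 d12 d13 d14 d23 d24 d34
        | by rewrite -E eqxx in d01 d02 d03 d04 d12 d13 d14 d23 d24 d34 ].
move=> [[|[|[|[|[|i]]]]] Hi] [[|[|[|[|[|j]]]]] Hj] //= _; rewrite /bull_adj /=;
first [ by [] | by rewrite e_sym | by apply/negbTE | by apply/negbTE; rewrite e_sym ].
Qed.

Lemma on_or_off_cycle (T : eqType) k (h : 'I_k -> T) v :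
  (exists l, v = h l) \/ (forall l, v != h l).
Proof.
have [l /eqP v_l | v_off] := pickP (fun l => v == h l); first by left; exists l.
by right=> l; rewrite v_off.
Qed.

Definition induced_cycle (T : finType) (e : rel T) k (h : 'I_k -> T) : Prop :=
  injective h /\ forall i j, i != j -> e (h i) (h j) = cyc_adj k i j.

(* [v] is adjacent to the vertices of [h] other than itself exactly as a vertex
   of the clique [K_m] of an expansion of [h] would be. *)
Definition at_pos (T : finType) (e : rel T) k (h : 'I_k -> T) (v : T) (m : 'I_k) :=
  [forall j, (v != h j) ==> (e v (h j) == cyc_nbhd m j)].

Section InducedCycle.

Variables (T : finType) (e : rel T) (k : nat) (h : 'I_k -> T).
Hypothesis h_cyc : induced_cycle e h.

Lemma induced_cycle_neq a b : a != b -> h a != h b.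
Proof. by rewrite (inj_eq h_cyc.1). Qed.

Lemma induced_cycle_edge a b : a != b -> cyc_adj k a b -> e (h a) (h b).
Proof. by move=> ab; rewrite h_cyc.2. Qed.

Lemma induced_cycle_nonedge a b : ~~ cyc_nbhd a b -> ~~ e (h a) (h b).
Proof. by case/norP=> ab; rewrite h_cyc.2. Qed.

Lemma at_posP v m :
  reflect (forall j, v != h j -> e v (h j) = cyc_nbhd m j) (at_pos e h v m).
Proof.
apply: (iffP forallP) => [pos j vj | pos j]; first by apply/eqP; move: (pos j); rewrite vj.
by apply/implyP => vj; rewrite pos.
Qed.

Lemma at_pos_cycle m : at_pos e h (h m) m.
Proof.
apply/at_posP => j; rewrite (inj_eq h_cyc.1) => mj.
by rewrite h_cyc.2 // /cyc_nbhd (negbTE mj).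
Qed.

Lemma at_pos_uniq v m m' : 6 <= k -> at_pos e h v m -> at_pos e h v m' -> m = m'.
Proof.
move=> k_ge6 /at_posP pos /at_posP pos'.
have [i off_i] : exists i, forall j, j != i -> v != h j.
  have [[i ->] | v_off] := on_or_off_cycle h v; last by exists m.
  by exists i => j; rewrite eq_sym; apply: induced_cycle_neq.
by apply: (cyc_nbhd_inj_off k_ge6 (i := i)) => j ji; rewrite -pos ?pos' ?off_i.
Qed.

Lemma at_pos_cycleE l m : 6 <= k -> at_pos e h (h l) m = (m == l).
Proof.
move=> k_ge6; apply/idP/eqP => [l_pos | ->]; last exact: at_pos_cycle.
exact: at_pos_uniq l_pos (at_pos_cycle l).
Qed.

Lemma induced_cycle_upd i u : symmetric e -> (forall j, u != h j) -> at_pos e h u i ->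
  induced_cycle e [eta h with i |-> u].
Proof.
move=> e_sym u_off /at_posP pos; split=> a b /=.
  case: (eqVneq a i) => [-> | ai]; case: (eqVneq b i) => [-> | bi] //.
  - by move=> E; move: (u_off b); rewrite E eqxx.
  - by move=> E; move: (u_off a); rewrite E eqxx.
  - exact: h_cyc.1.
case: (eqVneq a i) => [-> | ai]; case: (eqVneq b i) => [-> | bi] //= ab.
- by rewrite pos // /cyc_nbhd eq_sym (negbTE bi).
- by rewrite e_sym pos // cyc_nbhd_sym /cyc_nbhd (negbTE ai).
- by rewrite h_cyc.2.
Qed.

End InducedCycle.

Ltac cyc_side :=
  match goal with
  | |- symmetric _ => assumption
  | h_cyc : induced_cycle _ ?h |- is_true (?h _ != ?h _) =>
      apply: (induced_cycle_neq h_cyc);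
      first [by apply: cyc_nbhd_neq | by rewrite eq_sym; apply: cyc_nbhd_neq | cyc_arith]
  | h_cyc : induced_cycle _ ?h |- is_true (~~ _ (?h _) (?h _)) =>
      apply: (induced_cycle_nonedge h_cyc); first [done | cyc_arith]
  | h_cyc : induced_cycle _ ?h |- is_true (_ (?h _) (?h _)) =>
      apply: (induced_cycle_edge h_cyc); cyc_arith
  | e_sym : symmetric _ |- _ => first [done | by rewrite eq_sym | by rewrite e_sym]
  end.

Section ClawBullFree.

Variables (T : finType) (e : rel T) (k : nat).
Hypotheses (e_sym : symmetric e) (e_irr : irreflexive e).
Hypotheses (claw_free : ~ has_induced e claw_adj) (bull_free : ~ has_induced e bull_adj).
Hypothesis k_ge6 : 6 <= k.

Section OutsideVertex.

Variables (h : 'I_k -> T) (v : T).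
Hypotheses (h_cyc : induced_cycle e h) (v_off : forall j, v != h j).

Lemma nbr_pred_or_succ a : e v (h a) -> e v (h (ord_pred a)) || e v (h (ordS a)).
Proof.
move=> va; apply: contraT => /norP [vp vs]; case: claw_free.
by apply: (@induced_claw _ _ (h a) v (h (ord_pred a)) (h (ordS a))); cyc_side.
Qed.

Lemma nbr_pair_extends a : e v (h a) -> e v (h (ordS a)) ->
  e v (h (ord_pred a)) || e v (h (ordS (ordS a))).
Proof.
move=> va va1; apply: contraT => /norP [vp va2]; case: bull_free.
by apply: (@induced_bull _ _ (h a) (h (ordS a)) v (h (ord_pred a)) (h (ordS (ordS a))));
  cyc_side.
Qed.

Lemma no_four_consecutive_nbrs c :
  ~~ [&& e v (h c), e v (h (ordS c)), e v (h (ordS (ordS c)))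
       & e v (h (ordS (ordS (ordS c))))].
Proof.
apply/negP => /and4P [vc vc1 vc2 vc3].
have [vc4 | vc4] := boolP (e v (h (ordS (ordS (ordS (ordS c)))))).
  apply: claw_free.
  by apply: (@induced_claw _ _ v (h c) (h (ordS (ordS c))) (h (ordS (ordS (ordS (ordS c))))));
    cyc_side.
apply: bull_free.
by apply: (@induced_bull _ _ v (h (ordS (ordS (ordS c)))) (h (ordS (ordS c))) (h c)
  (h (ordS (ordS (ordS (ordS c)))))); cyc_side.
Qed.

Lemma outside_nbrs i0 : e v (h i0) -> exists m, forall j, e v (h j) = cyc_nbhd m j.
Proof.
move=> vi0.
have [a /andP [va va1]] : exists a, e v (h a) && e v (h (ordS a)).
  have /orP [vp | vs] := nbr_pred_or_succ vi0; last by exists i0; rewrite vi0.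
  by exists (ord_pred i0); rewrite ord_predK vp.
have [b /and3P [vb vb1 vb2]] :
    exists b, [&& e v (h b), e v (h (ordS b)) & e v (h (ordS (ordS b)))].
  have /orP [vp | va2] := nbr_pair_extends va va1; last by exists a; rewrite va va1.
  by exists (ord_pred a); rewrite ord_predK vp va va1.
exists (ordS b) => j.
have [near | far] := boolP (cyc_nbhd (ordS b) j).
  by move: near; rewrite cyc_nbhdE ordSK => /or3P [] /eqP ->.
apply/negbTE/negP => vj.
have [j_pred | j_not_pred] := eqVneq j (ord_pred b).
  by move: (no_four_consecutive_nbrs j); rewrite vj j_pred ord_predK vb vb1 vb2.
have [j_succ3 | j_not_succ3] := eqVneq j (ordS (ordS (ordS b))).
  by move: (no_four_consecutive_nbrs b); rewrite vb vb1 vb2 -j_succ3 vj.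
have /andP [bj b2j] : ~~ cyc_nbhd b j && ~~ cyc_nbhd (ordS (ordS b)) j.
  move: far; rewrite !cyc_nbhdE !ordSK (negbTE j_not_pred) (negbTE j_not_succ3).
  by case: (j == b); case: (j == ordS b); case: (j == ordS (ordS b)).
apply: claw_free.
by apply: (@induced_claw _ _ v (h b) (h (ordS (ordS b))) (h j)); cyc_side.
Qed.

End OutsideVertex.

Lemma at_pos_nbr (h : 'I_k -> T) u w i : induced_cycle e h -> at_pos e h u i -> e u w ->
  exists m, at_pos e h w m.
Proof.
move=> h_cyc u_pos uw.
have [[l ->] | w_off] := on_or_off_cycle h w; first by exists l; apply: at_pos_cycle.
have [l wl | w_far] := pickP (fun l => e w (h l)).
  have [m w_nbrs] := outside_nbrs h_cyc w_off wl.
  by exists m; apply/at_posP => j _; rewrite w_nbrs.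
(* Otherwise [w] would see a single vertex, [u], of the cycle [h] with [h i]
   replaced by [u]. *)
exfalso.
have u_off j : u != h j by apply: contraTneq uw => ->; rewrite e_sym w_far.
have h'_cyc := induced_cycle_upd h_cyc e_sym u_off u_pos.
have w_off' j : w != [eta h with i |-> u] j.
  by rewrite /=; case: (j == i) => //; apply: contraTneq uw => ->; rewrite e_irr.
have w_u : e w ([eta h with i |-> u] i) by rewrite /= eqxx e_sym.
have [m w_nbrs'] := outside_nbrs h'_cyc w_off' w_u.
have [l li ml] : exists2 l, l != i & cyc_nbhd m l.
  have [mi | mi] := eqVneq (ordS m) i; last by exists (ordS m); rewrite ?cyc_nbhdE ?eqxx ?orbT.
  by exists (ord_pred m); rewrite ?cyc_nbhdE ?eqxx ?orbT // -mi; cyc_arith.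
by move: (w_nbrs' l); rewrite /= (negbTE li) w_far ml.
Qed.

Lemma at_pos_adj_off (h : 'I_k -> T) x y i j : induced_cycle e h ->
  (forall l, x != h l) -> (forall l, y != h l) -> x != y ->
  at_pos e h x i -> at_pos e h y j -> e x y = cyc_nbhd i j.
Proof.
(* In the cycle [h] with [h i] replaced by [x], [y] still sits at position [j]. *)
move=> h_cyc x_off y_off xy x_pos /at_posP y_pos.
have {}y_pos l : e y (h l) = cyc_nbhd j l by rewrite y_pos.
have h'_cyc := induced_cycle_upd h_cyc e_sym x_off x_pos.
have y_off' l : y != [eta h with i |-> x] l.
  by rewrite /=; case: (l == i); rewrite // eq_sym.
have [l y_l] : exists l, e y ([eta h with i |-> x] l).
  have [ji | ji] := eqVneq j i; last by exists j; rewrite /= (negbTE ji) y_pos cyc_nbhdE eqxx.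
  have si : ordS j != i by rewrite ji; cyc_arith.
  by exists (ordS j); rewrite /= (negbTE si) y_pos cyc_nbhdE eqxx orbT.
have [m y_pos'] := outside_nbrs h'_cyc y_off' y_l.
have mj : m = j.
  by apply: (cyc_nbhd_inj_off k_ge6 (i := i)) => l' l'i; rewrite -y_pos' /= (negbTE l'i) y_pos.
by move: (y_pos' i); rewrite /= eqxx e_sym mj cyc_nbhd_sym.
Qed.

Lemma at_pos_adj (h : 'I_k -> T) x y i j : induced_cycle e h -> x != y ->
  at_pos e h x i -> at_pos e h y j -> e x y = cyc_nbhd i j.
Proof.
move=> h_cyc xy x_pos y_pos.
have [[l y_l] | y_off] := on_or_off_cycle h y.
  move: y_pos xy; rewrite y_l at_pos_cycleE // => /eqP -> x_l.
  by move/at_posP: x_pos => ->.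
have [[l x_l] | x_off] := on_or_off_cycle h x.
  move: x_pos xy; rewrite x_l at_pos_cycleE // => /eqP -> l_y.
  by rewrite e_sym cyc_nbhd_sym; move/at_posP: y_pos => ->; rewrite // eq_sym.
exact: (at_pos_adj_off h_cyc x_off y_off xy x_pos y_pos).
Qed.

Lemma exists_at_pos (h : 'I_k -> T) v : connected e -> induced_cycle e h -> exists m, at_pos e h v m.
Proof.
move=> e_conn h_cyc.
have i0 : 'I_k := Ordinal (leq_trans (isT : 0 < 6) k_ge6).
have [p p_path ->] := connectP (e_conn (h i0) v).
have : exists m, at_pos e h (h i0) m by exists i0; apply: at_pos_cycle.
elim: p (h i0) p_path => [|y p IHp] x //=.
move=> /andP [xy p_path] [m x_pos].
exact: IHp p_path (at_pos_nbr h_cyc x_pos xy).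
Qed.

End ClawBullFree.

Theorem lemma4 (T : finType) (e : rel T) (k : nat) :
  symmetric e -> irreflexive e -> connected e ->
  ~ has_induced e claw_adj -> ~ has_induced e bull_adj ->
  6 <= k -> has_induced e (cyc_adj k) ->
  is_expansion e (cyc_adj k).
Proof.
move=> e_sym e_irr e_conn claw_free bull_free k_ge6 [h h_cyc].
have pos v := exists_at_pos e_sym e_irr claw_free bull_free k_ge6 v e_conn h_cyc.
exists (fun v => xchoose (pos v)); split=> [m | x y xy].
  by exists (h m); apply/eqP; rewrite -(at_pos_cycleE h_cyc _ _ k_ge6); apply: xchooseP.
exact: (at_pos_adj e_sym claw_free bull_free k_ge6 h_cyc xy (xchooseP (pos x)) (xchooseP (pos y))).
Qed.
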